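(* Let $K$ be a positive integer, let $J$ be a positive integer or $\infty$, write $[J]=\{1,\dots,J\}$ (with $[J]=\mathbb{Z}_+$ if $J=\infty$), and let $Q=[Q_1,\dots,Q_K]$ with $Q_l:[J]\to\{0,1\}$. Let $k\in\{1,\dots,K\}$ and suppose $$\{k\}=\bigcap_{\substack{S\subset\{1,\dots,K\}\\ k\in S,\ \mathcal{R}(S)\neq\emptyset}} S.$$ Then $k$ does not mask any $k'\neq k$.
   Context: $\operatorname{supp}(Q_l)=\{j: Q_l(j)=1\}$. For $S\subset\{1,\dots,K\}$, $\mathcal{R}(S)\subset[J]$ is the set of indices $j$ such that $Q_l(j)=1$ for all $l\in S$ and $Q_l(j)=0$ for all $l\notin S$. We say $k$ masks $k'$ if $\operatorname{supp}(Q_{k})\subset\operatorname{supp}(Q_{k'})$. An intersection over an empty family of sets is taken to be empty. *)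

From mathcomp Require Import all_boot.
Set Implicit Arguments. Unset Strict Implicit. Unset Printing Implicit Defensive.

(* The column index set [J]: J = Some n means [J] = {1,...,n};
   J = None means J = infinity, [J] = {1,2,3,...} = Z_+. *)
Definition inJ (J : option nat) (j : nat) : Prop :=
  match J with
  | Some n => 1 <= j <= n
  | None => 1 <= j
  end.

(* Q : 'I_K -> nat -> bool; Q l is Q_{l+1} (0-based attribute index),
   only its values on [J] matter. *)

Definition supp (K : nat) (J : option nat) (Q : 'I_K -> nat -> bool)
  (l : 'I_K) (j : nat) : Prop := inJ J j /\ Q l j = true.

Definition inR (K : nat) (J : option nat) (Q : 'I_K -> nat -> bool)
  (S : {set 'I_K}) (j : nat) : Prop :=
  inJ J j /\ (forall l : 'I_K, Q l j = (l \in S)).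

Definition R_nonempty (K : nat) (J : option nat) (Q : 'I_K -> nat -> bool)
  (S : {set 'I_K}) : Prop := exists j, inR J Q S j.

(* Intersection of a family of subsets of {1..K}; empty family gives the
   empty set (convention of the paper). *)
Definition family_inter (K : nat) (F : {set 'I_K} -> Prop) (l : 'I_K) : Prop :=
  (exists S, F S) /\ (forall S, F S -> l \in S).

Definition masks (K : nat) (J : option nat) (Q : 'I_K -> nat -> bool)
  (k k' : 'I_K) : Prop :=
  forall j, supp J Q k j -> supp J Q k' j.

From mathcomp Require Import all_boot.
From Stdlib Require Import Classical.

(* Since k' lies outside the intersection {k}, some S containing k with R(S)
   nonempty misses k'.  Any j in R(S) then has Q_k(j) = 1 and Q_k'(j) = 0, so
   supp(Q_k) is not contained in supp(Q_k'). *)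

Lemma not_family_inter_witness {K : nat} {F : {set 'I_K} -> Prop} {l : 'I_K} :
  (exists S, F S) -> ~ family_inter F l -> exists2 S, F S & l \notin S.
Proof.
move=> F_ne l_notin; apply: NNPP => no_witness; apply: l_notin; split=> // S FS.
by apply: NNPP => lS; apply: no_witness; exists S => //; apply/negP.
Qed.

Lemma inR_not_masks {K : nat} {J : option nat} {Q : 'I_K -> nat -> bool}
    {S : {set 'I_K}} {j : nat} {k k' : 'I_K} :
  inR J Q S j -> k \in S -> k' \notin S -> ~ masks J Q k k'.
Proof.
move=> [jJ QjS] kS k'S k_masks.
have [_] := k_masks j (conj jJ (etrans (QjS k) kS)).
by rewrite QjS (negbTE k'S).
Qed.

Theorem lemma4 (K : nat) (J : option nat) (Q : 'I_K -> nat -> bool)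
  (k : 'I_K) (hK : 0 < K)
  (hJ : match J return Prop with Some n => 0 < n | None => True end)
  (hk : forall l : 'I_K,
      l = k <-> family_inter (fun S : {set 'I_K} => k \in S /\ R_nonempty J Q S) l) :
  forall k' : 'I_K, k' <> k -> ~ masks J Q k k'.
Proof.
move=> k' k'_neq.
have [F_ne _] := proj1 (hk k) erefl.
have k'_notin : ~ family_inter (fun S => k \in S /\ R_nonempty J Q S) k'.
  by move=> /hk.
have [S [kS [j jRS]] k'S] := not_family_inter_witness F_ne k'_notin.
exact: inR_not_masks jRS kS k'S.
Qed.
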